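(* Let $\mathcal{X}$ be a finite alphabet with $|\mathcal{X}|=q$, let $P_0,P_1$ be probability mass functions on $\mathcal{X}$ with the same support $\mathcal{X}$, let $\varepsilon>0$, $n>1$, $k^\star\in(1,n]$, and let $\mathcal{D}=(x_1,\dots,x_n)$ have independent entries with $x_1,\dots,x_{k^\star-1}\sim P_0$ and $x_{k^\star},\dots,x_n\sim P_1$. The Offline RR-CPD estimator passes each $x_i$ independently through the randomized response mechanism $W^r$ to obtain $y_i$, lets $Q_j(y)=\sum_xP_j(x)W^r(y|x)$ ($j=0,1$), and outputs $\hat k\in\arg\max_{k\in[n]}\sum_{i=k}^n\log\frac{Q_1(y_i)}{Q_0(y_i)}$. Then this estimator is $\varepsilon$-locally differentially private and, for any $\alpha\in[n]$, $(\alpha,\beta_r)$-accurate with $$\beta_r\le2\min\Bigg\{\sum_{i=1}^{i^*}\exp\Big(\frac{-2^{i-1}\alpha C_r^2}{s_r^2}\Big);\ \Big(1-\frac{C_r}{2}\Big)^{\alpha/2}\Bigg\},$$ where $s_r=\min\{2\varepsilon;\ \tanh(\varepsilon/2)\,s\}$, $C_r=2\big(\frac{e^\varepsilon-1}{e^\varepsilon+q-1}\big)^2d_{\mathrm{TV}}^2(P_0,P_1)$, $s=\max_x\log\frac{P_1(x)}{P_0(x)}-\min_x\log\frac{P_1(x)}{P_0(x)}$, $i^*=\lceil\log_2(\frac{n-1}{\alpha})\rceil$, and $\tanh(\varepsilon/2)=\frac{e^\varepsilon-1}{e^\varepsilon+1}$.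
   Context: Randomized response: $W^r(y|x)=\frac{e^\varepsilon}{e^\varepsilon+q-1}$ if $y=x$ and $\frac{1}{e^\varepsilon+q-1}$ if $y\ne x$ (output alphabet $\mathcal{X}$). A procedure is $\varepsilon$-LDP if each data point is released through a mechanism $W$ with $W(S|x)\le e^\varepsilon W(S|x')$ for all $x,x'$ and output sets $S$. $(\alpha,\beta)$-accurate means $\mathbb{P}\{\hat k\notin[k^\star-\alpha,k^\star+\alpha]\}=\beta$. $d_{\mathrm{TV}}(P_0,P_1)=\frac12\sum_x|P_0(x)-P_1(x)|$. $[a]=\{1,\dots,a\}$; natural logarithms. *)

From HB Require Import structures.
From mathcomp Require Import all_boot all_order all_algebra.
From mathcomp Require Import all_classical all_reals all_analysis.
Set Implicit Arguments. Unset Strict Implicit. Unset Printing Implicit Defensive.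
Import Order.TTheory GRing.Theory Num.Theory.
Local Open Scope ring_scope.

Section Defs.
Variable R : realType.
Variable X : finType.

Definition Wr (eps : R) (x y : X) : R :=
  if x == y then expR eps / (expR eps + #|X|%:R - 1)
  else 1 / (expR eps + #|X|%:R - 1).

Definition ldp (Y : finType) (eps : R) (W : X -> Y -> R) : Prop :=
  forall (x x' : X) (S : {set Y}),
    \sum_(y in S) W x y <= expR eps * \sum_(y in S) W x' y.

Definition is_pmf (P : X -> R) : Prop := (forall x, 0 <= P x) /\ \sum_x P x = 1.

Definition Qout (W : X -> X -> R) (P : X -> R) (y : X) : R :=
  \sum_x P x * W x y.

Definition dTV (P0 P1 : X -> R) : R := 2^-1 * \sum_x `|P0 x - P1 x|.

Definition maxf (f : X -> R) : R :=
  if [pick x : X] is Some x0 then \big[Num.max/f x0]_x f x else 0.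
Definition minf (f : X -> R) : R :=
  if [pick x : X] is Some x0 then \big[Num.min/f x0]_x f x else 0.

Definition sP (P0 P1 : X -> R) : R :=
  maxf (fun x => ln (P1 x / P0 x)) - minf (fun x => ln (P1 x / P0 x)).

(* distribution of entry i (0-based, i.e. position i.+1): P0 before k*, P1 from k* on *)
Definition Pat (n kstar : nat) (P0 P1 : X -> R) (i : 'I_n) : X -> R :=
  if (i.+1 < kstar)%N then P0 else P1.

(* Probability of an event on the privatized outputs y = (y_1..y_n), where
   x_i ~ Pat i independently and y_i ~ W(.|x_i) independently. *)
Definition probY (n kstar : nat) (P0 P1 : X -> R) (W : X -> X -> R)
    (E : pred {ffun 'I_n -> X}) : R :=
  \sum_(x : {ffun 'I_n -> X}) \sum_(y : {ffun 'I_n -> X} | E y)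
     \prod_(i < n) (Pat kstar P0 P1 i (x i) * W (x i) (y i)).

(* CUSUM-type statistic: sum_{i=k}^n log(Q1(y_i)/Q0(y_i)), k 1-based *)
Definition statS (n : nat) (Q0 Q1 : X -> R) (y : {ffun 'I_n -> X}) (k : nat) : R :=
  \sum_(i < n | (k <= i.+1)%N) ln (Q1 (y i) / Q0 (y i)).

Definition nat_of_pos (z : int) : nat := if z is Posz m then m else 0%N.

Definition log2 (x : R) : R := ln x / ln 2.

Definition rr_bound (n alpha : nat) (eps : R) (P0 P1 : X -> R) : R :=
  let q := #|X|%:R in
  let tanh_half := (expR eps - 1) / (expR eps + 1) in
  let s_r := Num.min (2 * eps) (tanh_half * sP P0 P1) in
  let C_r := 2 * ((expR eps - 1) / (expR eps + q - 1)) ^+ 2 * dTV P0 P1 ^+ 2 in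
  let istar := nat_of_pos (Num.ceil (log2 ((n%:R - 1) / alpha%:R))) in
  2 * Num.min
        (\sum_(1 <= i < istar.+1)
            expR (- ((2 ^+ i.-1) * alpha%:R * C_r ^+ 2) / s_r ^+ 2))
        ((1 - C_r / 2) `^ (alpha%:R / 2)).

End Defs.

From Pilot Require Import Defs.
From HB Require Import structures.
From mathcomp Require Import all_boot all_order all_algebra.
From mathcomp Require Import all_classical all_reals all_analysis.
From mathcomp Require Import zify ring lra.
Set Implicit Arguments. Unset Strict Implicit. Unset Printing Implicit Defensive.
Import Order.TTheory GRing.Theory Num.Theory.
Local Open Scope ring_scope.

(* Randomized response is eps-LDP since every entry of W^r lies between
   1/(e^eps+q-1) and e^eps/(e^eps+q-1).  The privatized outputs are independent,
   with law Q_0 before k* and Q_1 from k* on, and the estimator maximizes the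
   CUSUM statistic of the log-likelihood ratio of (Q_0, Q_1).  If khat < k* - alpha,
   the log-likelihood ratio over the last m > alpha positions before k* is
   nonnegative, so the running product of sqrt(Q_1/Q_0) over these positions
   reaches 1; its factors are independent with mean the Bhattacharyya
   coefficient B of (Q_0, Q_1), and a Ville-type maximal inequality bounds the
   probability by B^alpha.  The case khat > k* + alpha is symmetric.  Finally
   B^2 + d_TV(Q_0, Q_1)^2 <= 1 (Le Cam), d_TV(Q_0, Q_1) is d_TV(P_0, P_1)
   contracted by (e^eps-1)/(e^eps+q-1) <= tanh(eps/2), and
   d_TV(P_0, P_1) <= tanh(s/4); together these turn 2 B^alpha into each of the
   two terms of the bound. *)

Section CauchySchwarz.
Variables (R : realFieldType) (I : finType).

Lemma CauchySchwarz_sum (u v : I -> R) :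
  (\sum_i u i * v i) ^+ 2 <= (\sum_i u i ^+ 2) * (\sum_i v i ^+ 2).
Proof.
set A := \sum_i u i ^+ 2; set B := \sum_i v i ^+ 2; set C := \sum_i u i * v i.
have discr t : 0 <= t ^+ 2 * A - 2 * t * C + B.
  have -> : t ^+ 2 * A - 2 * t * C + B = \sum_i (t * u i - v i) ^+ 2.
    rewrite /A /B /C !mulr_sumr -sumrB -big_split /=.
    by apply: eq_bigr => i _; ring.
  by apply: sumr_ge0 => i _; rewrite sqr_ge0.
have A0 : 0 <= A by apply: sumr_ge0 => i _; rewrite sqr_ge0.
have [A_eq0|A_neq0] := eqVneq A 0.
  have u0 i : u i = 0.
    apply/eqP; rewrite -sqrf_eq0; apply/eqP.
    by apply: (psumr_eq0P (P := xpredT) (F := fun i => u i ^+ 2)) => // j _; rewrite sqr_ge0.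
  have -> : C = 0 by rewrite /C big1 // => i _; rewrite u0 mul0r.
  by rewrite A_eq0 expr0n mul0r.
have A_gt0 : 0 < A by rewrite lt_def A_neq0 A0.
have := discr (C / A).
have -> : (C / A) ^+ 2 * A - 2 * (C / A) * C + B = B - C ^+ 2 / A by field.
by rewrite subr_ge0 ler_pdivrMr // mulrC.
Qed.

End CauchySchwarz.

Section Bhattacharyya.
Variables (R : realType) (X : finType).

Definition bhattacharyya (Q0 Q1 : X -> R) : R := \sum_x Num.sqrt (Q0 x * Q1 x).

Lemma bhattacharyya_ge0 (Q0 Q1 : X -> R) : 0 <= bhattacharyya Q0 Q1.
Proof. by apply: sumr_ge0 => x _; rewrite sqrtr_ge0. Qed.

Lemma bhattacharyyaC (Q0 Q1 : X -> R) : bhattacharyya Q0 Q1 = bhattacharyya Q1 Q0.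
Proof. by apply: eq_bigr => x _; rewrite mulrC. Qed.

(* Le Cam: 2 dTV = sum |sqrt Q0 - sqrt Q1| (sqrt Q0 + sqrt Q1), then Cauchy-Schwarz. *)
Lemma bhattacharyya_sqr_add_dTV_sqr_le1 (Q0 Q1 : X -> R) : is_pmf Q0 -> is_pmf Q1 ->
  bhattacharyya Q0 Q1 ^+ 2 + dTV Q0 Q1 ^+ 2 <= 1.
Proof.
move=> [Q0_ge0 Q0_sum1] [Q1_ge0 Q1_sum1].
set a := fun x => Num.sqrt (Q0 x); set b := fun x => Num.sqrt (Q1 x).
have a2 x : a x ^+ 2 = Q0 x by rewrite sqr_sqrtr.
have b2 x : b x ^+ 2 = Q1 x by rewrite sqr_sqrtr.
have bhattacharyyaE : bhattacharyya Q0 Q1 = \sum_x a x * b x.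
  by apply: eq_bigr => x _; rewrite sqrtrM.
have dTVE : \sum_x `|Q0 x - Q1 x| = \sum_x `|a x - b x| * (a x + b x).
  apply: eq_bigr => x _; rewrite -a2 -b2 subr_sqr normrM.
  by rewrite [`|a x + b x|]ger0_norm // addr_ge0 ?sqrtr_ge0.
have := CauchySchwarz_sum (fun x => `|a x - b x|) (fun x => a x + b x).
rewrite -dTVE.
have -> : \sum_x `|a x - b x| ^+ 2 = \sum_x Q0 x + \sum_x Q1 x - 2 * \sum_x a x * b x.
  rewrite mulr_sumr -big_split -sumrB /=.
  by apply: eq_bigr => x _; rewrite real_normK ?num_real // -a2 -b2; ring.
have -> : \sum_x (a x + b x) ^+ 2 = \sum_x Q0 x + \sum_x Q1 x + 2 * \sum_x a x * b x.
  rewrite mulr_sumr -!big_split /=.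
  by apply: eq_bigr => x _; rewrite -a2 -b2; ring.
rewrite Q0_sum1 Q1_sum1 -bhattacharyyaE /dTV => CS.
have -> : (2^-1 * \sum_x `|Q0 x - Q1 x|) ^+ 2 = (\sum_x `|Q0 x - Q1 x|) ^+ 2 / 4 by field.
lra.
Qed.

Lemma bhattacharyya_le1 (Q0 Q1 : X -> R) : is_pmf Q0 -> is_pmf Q1 ->
  bhattacharyya Q0 Q1 <= 1.
Proof.
move=> pmf0 pmf1; have := bhattacharyya_sqr_add_dTV_sqr_le1 pmf0 pmf1.
by have := sqr_ge0 (dTV Q0 Q1); have := bhattacharyya_ge0 Q0 Q1; nra.
Qed.

Lemma bhattacharyya_expR_llr (Q0 Q1 : X -> R) :
  (forall x, 0 < Q0 x) -> (forall x, 0 < Q1 x) ->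
  bhattacharyya Q0 Q1 = \sum_v Q0 v * expR (ln (Q1 v / Q0 v) / 2).
Proof.
move=> Q0_gt0 Q1_gt0; apply: eq_bigr => v _.
have Q0_v := Q0_gt0 v; have Q1_v := Q1_gt0 v.
have -> : Q0 v * Q1 v = Q0 v ^+ 2 * (Q1 v / Q0 v) by field; rewrite gt_eqF.
rewrite sqrtrM ?sqr_ge0 // sqrtr_sqr ger0_norm ?ltW //; congr (_ * _).
by rewrite -powR12_sqrt ?divr_ge0 ?ltW // /powR gt_eqF ?divr_gt0 // mulrC.
Qed.

End Bhattacharyya.

Section ExpBounds.
Variable R : realType.

Lemma exprn_le_powR_half (b y : R) (k : nat) :
  0 <= b -> b ^+ 2 <= y -> b ^+ k <= y `^ (k%:R / 2).
Proof.
move=> b_ge0 b2y.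
have k2_ge0 : 0 <= k%:R / 2 :> R by rewrite divr_ge0.
have b2_nneg : b ^+ 2 \in Num.nneg by rewrite nnegrE exprn_ge0.
have y_nneg : y \in Num.nneg by rewrite nnegrE (le_trans _ b2y) // exprn_ge0.
apply: le_trans (ge0_ler_powR k2_ge0 b2_nneg y_nneg b2y).
rewrite -(powR_mulrn 2 b_ge0) -powRrM (_ : 2%:R * (k%:R / 2) = k%:R); last by field.
by rewrite powR_mulrn.
Qed.

Lemma ler_expRN_half (b c : R) : 0 <= b -> b ^+ 2 + c <= 1 -> b <= expR (- c / 2).
Proof.
move=> b_ge0 bc.
have b2 : b ^+ 2 <= expR (- c / 2) ^+ 2.
  rewrite -expRM_natr (_ : - c / 2 * 2%:R = - c); last by field.
  by apply: le_trans (expR_ge1Dx _); lra.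
by rewrite -(ler_sqr (x := b)) // nnegrE expR_ge0.
Qed.

Lemma sqr_div_sqr_le (C s : R) : 0 <= C -> 4 * C <= s ^+ 2 -> C ^+ 2 / s ^+ 2 <= C / 4.
Proof.
move=> C_ge0 Cs.
have [s0|s_neq0] := eqVneq (s ^+ 2) 0.
  by rewrite s0 invr0 mulr0 divr_ge0.
have s_gt0 : 0 < s ^+ 2 by rewrite lt_def s_neq0 sqr_ge0.
rewrite ler_pdivrMr // -subr_ge0.
have -> : C / 4 * s ^+ 2 - C ^+ 2 = C / 4 * (s ^+ 2 - 4 * C) by field.
by rewrite mulr_ge0 ?divr_ge0 ?subr_ge0.
Qed.

End ExpBounds.

Section TanhHalf.
Variable R : realType.

Definition tanh_half (z : R) : R := (expR z - 1) / (expR z + 1).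

Lemma tanh_half_ge0 (z : R) : 0 <= z -> 0 <= tanh_half z.
Proof.
move=> z_ge0; have : 1 <= expR z by rewrite -expR0 ler_expR.
by move=> ez; rewrite divr_ge0 //; lra.
Qed.

Lemma sqr_tanh_le (v : R) : 0 <= v -> ((1 - v ^+ 2) / (1 + v ^+ 2)) ^+ 2 <= 2 * (1 - v) ^+ 2.
Proof.
move=> v_ge0; have d_gt0 : 0 < (1 + v ^+ 2) ^+ 2.
  by rewrite exprn_gt0 //; have := sqr_ge0 v; lra.
rewrite expr_div_n ler_pdivrMr //.
have -> : (1 - v ^+ 2) ^+ 2 = (1 - v) ^+ 2 * (1 + v) ^+ 2 by ring.
have -> : 2 * (1 - v) ^+ 2 * (1 + v ^+ 2) ^+ 2 = (1 - v) ^+ 2 * (2 * (1 + v ^+ 2) ^+ 2).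
  by ring.
rewrite ler_wpM2l ?sqr_ge0 //.
have v2_ge0 := sqr_ge0 v; have := sqr_ge0 (1 - v).
have : 1 + v ^+ 2 <= (1 + v ^+ 2) ^+ 2 by rewrite expr2 ler_peMl //; lra.
lra.
Qed.

(* With v = e^{-z/2}: tanh(z/2) = (1 - v^2)/(1 + v^2) and 1 - v <= z/2. *)
Lemma tanh_half_sqr_le (z : R) : 0 <= z -> 2 * tanh_half z ^+ 2 <= z ^+ 2.
Proof.
move=> z_ge0; set v := expR (- z / 2).
have v_ge0 : 0 <= v by exact: expR_ge0.
have v_le1 : v <= 1 by rewrite /v -[leRHS]expR0 ler_expR; lra.
have v1 : 1 - v <= z / 2 by have := expR_ge1Dx (- z / 2); rewrite -/v; lra.
have -> : tanh_half z = (1 - v ^+ 2) / (1 + v ^+ 2).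
  have ez : 0 < expR z by exact: expR_gt0.
  have -> : v ^+ 2 = (expR z)^-1.
    by rewrite -expRM_natr -expRN; congr expR; field.
  by rewrite /tanh_half; field; rewrite !gt_eqF //; lra.
have : (1 - v) ^+ 2 <= (z / 2) ^+ 2 by rewrite ler_sqr ?nnegrE //; lra.
have : (z / 2) ^+ 2 = z ^+ 2 / 4 by field.
by have := sqr_tanh_le v_ge0; lra.
Qed.

End TanhHalf.

Section TotalVariation.
Variables (R : realType) (X : finType).

Lemma dTV_ge0 (P0 P1 : X -> R) : 0 <= dTV P0 P1.
Proof. by rewrite /dTV mulr_ge0 // sumr_ge0. Qed.

Lemma dTV_le1 (P0 P1 : X -> R) : is_pmf P0 -> is_pmf P1 -> dTV P0 P1 <= 1.
Proof.
move=> [P0_ge0 P0_sum1] [P1_ge0 P1_sum1].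
have : \sum_x `|P0 x - P1 x| <= \sum_x (P0 x + P1 x).
  by apply: ler_sum => x _; apply: le_trans (ler_normB _ _) _; rewrite !ger0_norm.
by rewrite big_split /= P0_sum1 P1_sum1 /dTV; lra.
Qed.

Lemma dTV_card1 (P0 P1 : X -> R) : is_pmf P0 -> is_pmf P1 -> #|X| = 1%N -> dTV P0 P1 = 0.
Proof.
move=> [_ P0_sum1] [_ P1_sum1] /fintype1[x0 Xx0].
have sumE (F : X -> R) : \sum_x F x = F x0.
  by rewrite (big_pred1 x0) // => x /=; rewrite [x]Xx0 eqxx.
by move: P0_sum1 P1_sum1; rewrite /dTV !sumE => -> ->; rewrite subrr normr0 mulr0.
Qed.

Lemma sum_sub_predC (P0 P1 : X -> R) (A : pred X) : is_pmf P0 -> is_pmf P1 ->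
  \sum_(x | A x) (P1 x - P0 x) = \sum_(x | ~~ A x) (P0 x - P1 x).
Proof.
move=> [_ P0_sum1] [_ P1_sum1].
have : \sum_x (P1 x - P0 x) = 0 by rewrite sumrB P0_sum1 P1_sum1 subrr.
rewrite (bigID A) /= => /eqP; rewrite addr_eq0 => /eqP ->.
by rewrite -sumrN; apply: eq_bigr => x _; rewrite opprB.
Qed.

Lemma dTV_sum_gt (P0 P1 : X -> R) : is_pmf P0 -> is_pmf P1 ->
  dTV P0 P1 = \sum_(x | P0 x < P1 x) (P1 x - P0 x).
Proof.
move=> pmf0 pmf1; rewrite /dTV (bigID (fun x => P0 x < P1 x)) /=.
rewrite (eq_bigr (fun x => P1 x - P0 x)); last first.
  by move=> x lt01; rewrite ltr0_norm ?opprB // subr_lt0.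
rewrite [X in _ + X](eq_bigr (fun x => P0 x - P1 x)); last first.
  by move=> x; rewrite -leNgt => le10; rewrite ger0_norm // subr_ge0.
by rewrite -sum_sub_predC //; field.
Qed.

Lemma dTV_le_ratio_bounds (P0 P1 : X -> R) (L U : R) : is_pmf P0 -> is_pmf P1 ->
  (forall x, L * P0 x <= P1 x) -> (forall x, P1 x <= U * P0 x) ->
  exists2 p, 0 <= p <= 1 & dTV P0 P1 <= (U - 1) * p /\ dTV P0 P1 <= (1 - L) * (1 - p).
Proof.
move=> pmf0 pmf1 lo up; have [P0_ge0 P0_sum1] := pmf0.
set A := fun x => P0 x < P1 x.
have P0_split : \sum_(x | A x) P0 x + \sum_(x | ~~ A x) P0 x = 1.
  by rewrite -P0_sum1 [RHS](bigID A).
exists (\sum_(x | A x) P0 x).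
  have : 0 <= \sum_(x | ~~ A x) P0 x by exact: sumr_ge0.
  have : 0 <= \sum_(x | A x) P0 x by exact: sumr_ge0.
  by move=> *; apply/andP; split; lra.
rewrite dTV_sum_gt //; split.
  by rewrite mulr_sumr; apply: ler_sum => x _; rewrite mulrBl mul1r; have := up x; lra.
have -> : 1 - \sum_(x | A x) P0 x = \sum_(x | ~~ A x) P0 x by lra.
rewrite sum_sub_predC //.
by rewrite mulr_sumr; apply: ler_sum => x _; rewrite mulrBl mul1r; have := lo x; lra.
Qed.

End TotalVariation.

Section LogLikelihoodRange.
Variables (R : realType) (X : finType).

Lemma le_maxf (f : X -> R) x : f x <= maxf f.
Proof. by rewrite /maxf; case: pickP => [x0 _|/(_ x)//]; exact: le_bigmax. Qed.

Lemma minf_le (f : X -> R) x : minf f <= f x.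
Proof. by rewrite /minf; case: pickP => [x0 _|/(_ x)//]; exact: bigmin_le. Qed.

Lemma sP_ge0 (P0 P1 : X -> R) : 0 <= sP P0 P1.
Proof.
rewrite /sP /maxf /minf subr_ge0; case: pickP => [x0 _|_] //.
exact: le_trans (bigmin_le _ x0 _) (le_bigmax _ _ x0).
Qed.

Lemma le_tanh_of_ratio_bounds (D L w p : R) : 0 < L -> 1 <= w -> 0 <= p <= 1 ->
  D <= (L * w ^+ 2 - 1) * p -> D <= (1 - L) * (1 - p) -> D <= (w - 1) / (w + 1).
Proof.
move=> L_gt0 w_ge1 /andP[p_ge0 p_le1] DU DL.
have w1_gt0 : 0 < w + 1 by lra.
have rhs_ge0 : 0 <= (w - 1) / (w + 1) by rewrite divr_ge0 ?subr_ge0 // ltW.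
have [U_le1|U_gt1] := leP (L * w ^+ 2) 1.
  apply: le_trans DU (le_trans _ rhs_ge0).
  by apply: mulr_le0_ge0; rewrite ?subr_le0.
have [L_ge1|L_lt1] := leP 1 L.
  apply: le_trans DL (le_trans _ rhs_ge0).
  by apply: mulr_le0_ge0; rewrite ?subr_le0 ?subr_ge0.
have w_gt1 : 1 < w.
  rewrite lt_neqAle w_ge1 andbT; apply/eqP => w1.
  by move: U_gt1; rewrite -w1 expr1n mulr1 ltNge (ltW L_lt1).
have key : D * (L * (w - 1) * (w + 1)) <= L * (w - 1) ^+ 2.
  have -> : D * (L * (w - 1) * (w + 1)) = D * (1 - L) + D * (L * w ^+ 2 - 1) by ring.
  have : D * (1 - L) <= (L * w ^+ 2 - 1) * p * (1 - L) by rewrite ler_wpM2r // subr_ge0 ltW.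
  have : D * (L * w ^+ 2 - 1) <= (1 - L) * (1 - p) * (L * w ^+ 2 - 1).
    by rewrite ler_wpM2r // subr_ge0 ltW.
  have : 0 <= (L * w - 1) ^+ 2 by exact: sqr_ge0.
  have -> : (L * w - 1) ^+ 2 = L * (w - 1) ^+ 2 - (L * w ^+ 2 - 1) * (1 - L) by ring.
  have -> : (1 - L) * (1 - p) * (L * w ^+ 2 - 1) =
            (L * w ^+ 2 - 1) * (1 - L) - (L * w ^+ 2 - 1) * p * (1 - L) by ring.
  lra.
have Lw_gt0 : 0 < L * (w - 1) by rewrite mulr_gt0 // subr_gt0.
rewrite ler_pdivlMr // -(ler_pM2r Lw_gt0).
have -> : D * (w + 1) * (L * (w - 1)) = D * (L * (w - 1) * (w + 1)) by ring.
by have -> : (w - 1) * (L * (w - 1)) = L * (w - 1) ^+ 2 by ring.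
Qed.

Lemma dTV_le_tanh_half (P0 P1 : X -> R) : is_pmf P0 -> is_pmf P1 ->
  (forall x, 0 < P0 x) -> (forall x, 0 < P1 x) ->
  dTV P0 P1 <= tanh_half (sP P0 P1 / 2).
Proof.
move=> pmf0 pmf1 P0_gt0 P1_gt0.
set r := fun x => ln (P1 x / P0 x).
have P1E x : P1 x = expR (r x) * P0 x.
  by rewrite /r lnK ?posrE ?divr_gt0 // divfK // gt_eqF.
have lo x : expR (minf r) * P0 x <= P1 x by rewrite P1E ler_pM2r // ler_expR minf_le.
have up x : P1 x <= expR (maxf r) * P0 x by rewrite P1E ler_pM2r // ler_expR le_maxf.
have [p p01 [DU DL]] := dTV_le_ratio_bounds pmf0 pmf1 lo up.
apply: (le_tanh_of_ratio_bounds (expR_gt0 (minf r)) _ p01 _ DL).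
  by rewrite -expR0 ler_expR divr_ge0 ?sP_ge0.
rewrite -expRM_natr -expRD (_ : minf r + _ = maxf r) //.
by rewrite /sP -/r; field.
Qed.

End LogLikelihoodRange.

Section RandomizedResponse.
Variables (R : realType) (X : finType) (eps : R).
Hypothesis eps_gt0 : 0 < eps.

Lemma Wr_den_gt0 : 0 < expR eps + #|X|%:R - 1.
Proof.
have : 1 < expR eps by rewrite expR_gt1.
by have : (0 : R) <= #|X|%:R by []; lra.
Qed.

Lemma ldp_Wr : @ldp R X X eps (Wr eps).
Proof.
move=> x x' S; rewrite mulr_sumr; apply: ler_sum => y _.
have inv_gt0 : 0 < (expR eps + #|X|%:R - 1)^-1 by rewrite invr_gt0 Wr_den_gt0.
have e_ge1 : 1 <= expR eps by rewrite ltW // expR_gt1.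
have up : Wr eps x y <= expR eps / (expR eps + #|X|%:R - 1).
  by rewrite /Wr; case: eqP => _ //; rewrite ler_pM2r.
have lo : 1 / (expR eps + #|X|%:R - 1) <= Wr eps x' y.
  by rewrite /Wr; case: eqP => _ //; rewrite ler_pM2r.
apply: le_trans up _; rewrite -[X in X / _]mulr1 -mulrA.
by rewrite ler_wpM2l ?expR_ge0.
Qed.

Lemma Qout_WrE (P : X -> R) y : \sum_x P x = 1 ->
  Qout (Wr eps) P y = (1 + (expR eps - 1) * P y) / (expR eps + #|X|%:R - 1).
Proof.
move=> P_sum1; have den_gt0 := Wr_den_gt0.
rewrite /Qout (bigD1 y) //= /Wr eqxx.
rewrite (eq_bigr (fun x => P x / (expR eps + #|X|%:R - 1))); last first.
  by move=> x /negbTE ->; rewrite mul1r.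
rewrite -mulr_suml.
have -> : \sum_(x | x != y) P x = 1 - P y by move: P_sum1; rewrite (bigD1 y) //=; lra.
by field; rewrite gt_eqF.
Qed.

Lemma Qout_Wr_gt0 (P : X -> R) y : is_pmf P -> 0 < Qout (Wr eps) P y.
Proof.
move=> [P_ge0 P_sum1]; rewrite Qout_WrE // divr_gt0 ?Wr_den_gt0 //.
have : 0 <= (expR eps - 1) * P y by rewrite mulr_ge0 // subr_ge0 ltW // expR_gt1.
lra.
Qed.

Lemma Qout_Wr_pmf (P : X -> R) : is_pmf P -> is_pmf (Qout (Wr eps) P).
Proof.
move=> pmfP; split=> [y|]; first exact/ltW/Qout_Wr_gt0.
have [_ P_sum1] := pmfP; under eq_bigr do rewrite Qout_WrE //.
rewrite -mulr_suml big_split /= sumr_const -mulr_sumr P_sum1.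
by field; rewrite gt_eqF ?Wr_den_gt0.
Qed.

Lemma dTV_Qout_Wr (P0 P1 : X -> R) : is_pmf P0 -> is_pmf P1 ->
  dTV (Qout (Wr eps) P0) (Qout (Wr eps) P1) =
  (expR eps - 1) / (expR eps + #|X|%:R - 1) * dTV P0 P1.
Proof.
move=> [_ P0_sum1] [_ P1_sum1]; have den_gt0 := Wr_den_gt0.
have t_ge0 : 0 <= (expR eps - 1) / (expR eps + #|X|%:R - 1).
  by apply: divr_ge0; apply: ltW; rewrite // subr_gt0 expR_gt1.
rewrite /dTV mulrCA; congr (_ * _); rewrite mulr_sumr; apply: eq_bigr => y _.
rewrite !Qout_WrE // (_ : _ - _ = (expR eps - 1) / (expR eps + #|X|%:R - 1) * (P0 y - P1 y)).
  by rewrite normrM ger0_norm.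
by field; rewrite gt_eqF.
Qed.

(* For q = 1 both distributions are the point mass, so the contraction
   coefficient only matters when q >= 2, where it is at most tanh(eps/2). *)
Lemma dTV_Qout_Wr_le_tanh (P0 P1 : X -> R) : is_pmf P0 -> is_pmf P1 ->
  dTV (Qout (Wr eps) P0) (Qout (Wr eps) P1) <= tanh_half eps * dTV P0 P1.
Proof.
move=> pmf0 pmf1; rewrite dTV_Qout_Wr //.
have : (0 < #|X|)%N.
  rewrite lt0n; apply/negP => /eqP/card0_eq X0; case: pmf0 => _.
  rewrite big_pred0 => [/esym/eqP|x]; first by rewrite oner_eq0.
  by have := X0 x; rewrite !inE.
rewrite leq_eqVlt => /orP[/eqP/esym X1|X2].
  by rewrite dTV_card1 // !mulr0.
rewrite ler_wpM2r ?dTV_ge0 // /tanh_half ler_pdivrMr ?Wr_den_gt0 //.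
have e_gt1 : 1 < expR eps by rewrite expR_gt1.
rewrite mulrAC ler_pdivlMr; last lra.
apply: ler_wpM2l; first by rewrite subr_ge0 ltW.
by rewrite -addrA lerD2l lerBrDr (_ : 1 + 1 = 2%:R) // ler_nat.
Qed.

Lemma dTV_Qout_Wr_sqr_le (P0 P1 : X -> R) : is_pmf P0 -> is_pmf P1 ->
  (forall x, 0 < P0 x) -> (forall x, 0 < P1 x) ->
  8 * dTV (Qout (Wr eps) P0) (Qout (Wr eps) P1) ^+ 2 <=
  Num.min (2 * eps) (tanh_half eps * sP P0 P1) ^+ 2.
Proof.
move=> pmf0 pmf1 P0_gt0 P1_gt0.
set d := dTV _ _; set th := tanh_half eps; set D := dTV P0 P1.
have th_ge0 : 0 <= th by rewrite tanh_half_ge0 // ltW.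
have D_ge0 : 0 <= D by exact: dTV_ge0.
have d_ge0 : 0 <= d by exact: dTV_ge0.
have d_le : d <= th * D by exact: dTV_Qout_Wr_le_tanh.
have d2 : d ^+ 2 <= th ^+ 2 * D ^+ 2.
  by rewrite -exprMn ler_sqr ?nnegrE //; apply: mulr_ge0.
have D2 : D ^+ 2 <= 1 by rewrite expr_le1 // dTV_le1.
have th2 : 2 * th ^+ 2 <= eps ^+ 2 by exact/tanh_half_sqr_le/ltW.
have Ds2 : 8 * D ^+ 2 <= sP P0 P1 ^+ 2.
  have s_ge0 := sP_ge0 P0 P1.
  have := tanh_half_sqr_le (divr_ge0 s_ge0 (ler0n R 2)).
  have : D ^+ 2 <= tanh_half (sP P0 P1 / 2) ^+ 2.
    by rewrite ler_sqr ?nnegrE ?tanh_half_ge0 ?divr_ge0 ?sP_ge0 ?dTV_le_tanh_half.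
  have -> : (sP P0 P1 / 2) ^+ 2 = sP P0 P1 ^+ 2 / 4 by field.
  lra.
have [_|_] := leP (2 * eps) (th * sP P0 P1).
  have -> : (2 * eps) ^+ 2 = 4 * eps ^+ 2 by ring.
  have : th ^+ 2 * D ^+ 2 <= th ^+ 2 by rewrite ler_piMr ?sqr_ge0.
  lra.
apply: (@le_trans _ _ (8 * (th ^+ 2 * D ^+ 2))); first by rewrite ler_pM2l.
by rewrite [in leRHS]exprMn mulrCA; apply: ler_wpM2l; rewrite ?sqr_ge0.
Qed.

End RandomizedResponse.

Section ProductMeasure.
Variables (R : realType) (X : finType) (n : nat) (mu : 'I_n -> X -> R).
Hypothesis mu_ge0 : forall i x, 0 <= mu i x.
Hypothesis mu_sum1 : forall i, \sum_x mu i x = 1.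

Definition prod_mass (y : {ffun 'I_n -> X}) : R := \prod_i mu i (y i).
Definition prob (E : pred {ffun 'I_n -> X}) : R := \sum_(y | E y) prod_mass y.

Lemma prod_mass_ge0 y : 0 <= prod_mass y.
Proof. by apply: prodr_ge0 => i _; apply: mu_ge0. Qed.

Lemma prob_le1 E : prob E <= 1.
Proof.
have <- : \sum_y prod_mass y = 1.
  by rewrite /prod_mass -(bigA_distr_bigA mu) /=; apply: big1 => i _; apply: mu_sum1.
by rewrite [leRHS](bigID E) /= lerDl; apply: sumr_ge0 => y _; apply: prod_mass_ge0.
Qed.

Lemma le_prob (E F : pred {ffun 'I_n -> X}) : (forall y, E y -> F y) -> prob E <= prob F.
Proof.
move=> EF; rewrite /prob (big_mkcond E) (big_mkcond F); apply: ler_sum => y _.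
by case: (E y) (EF y) => [->//|_]; case: (F y) => //; apply: prod_mass_ge0.
Qed.

Lemma prob_le_predU (E F G : pred {ffun 'I_n -> X}) :
  (forall y, E y -> F y || G y) -> prob E <= prob F + prob G.
Proof.
move=> EFG; rewrite /prob !(big_mkcond E) !(big_mkcond F) !(big_mkcond G) -big_split /=.
apply: ler_sum => y _; have := prod_mass_ge0 y.
by case: (E y) (EFG y) => [/(_ isT)|_]; case: (F y); case: (G y) => //= *; lra.
Qed.

Definition upd (y : {ffun 'I_n -> X}) (j : 'I_n) (v : X) : {ffun 'I_n -> X} :=
  [ffun i => if i == j then v else y i].

Lemma upd_eq y j v : upd y j v j = v.
Proof. by rewrite ffunE eqxx. Qed.

Lemma upd_neq y j v i : i != j -> upd y j v i = y i.
Proof. by rewrite ffunE => /negbTE ->. Qed.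

Lemma upd_upd y j u v : upd (upd y j u) j v = upd y j v.
Proof. by apply/ffunP => i; rewrite !ffunE; case: eqP. Qed.

Lemma upd_eq_id y j u : (upd y j u == y) = (y j == u).
Proof.
apply/eqP/eqP => [<-|yj]; first by rewrite upd_eq.
by apply/ffunP => i; rewrite ffunE; case: eqP => [->|].
Qed.

Lemma sum_fiber_upd j u v (F : {ffun 'I_n -> X} -> R) :
  \sum_(y : {ffun 'I_n -> X} | y j == v) F y =
  \sum_(y : {ffun 'I_n -> X} | y j == u) F (upd y j v).
Proof.
rewrite (reindex_onto (fun y => upd y j v) (fun y => upd y j u)) => [|y /eqP yj]; last first.
  by rewrite upd_upd; apply/eqP; rewrite upd_eq_id yj.
by apply: eq_bigl => y; rewrite upd_upd upd_eq_id upd_eq eqxx.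
Qed.

Lemma prob_fiber j v (E : pred {ffun 'I_n -> X}) :
  (forall y u, E (upd y j u) = E y) ->
  \sum_(y : {ffun 'I_n -> X} | (y j == v) && E y) prod_mass y = mu j v * prob E.
Proof.
move=> Einv; pose G y := if E y then \prod_(i | i != j) mu i (y i) else 0.
have prod_massE y : (if E y then prod_mass y else 0) = mu j (y j) * G y.
  by rewrite /G /prod_mass (bigD1 j) //=; case: (E y); rewrite ?mulr0.
have G_upd y u : G (upd y j u) = G y.
  rewrite /G Einv; congr (if _ then _ else _).
  by apply: eq_bigr => i ij; rewrite upd_neq.
have fiber u : \sum_(y : {ffun 'I_n -> X} | y j == u) G y =
                \sum_(y : {ffun 'I_n -> X} | y j == v) G y.
  by rewrite (sum_fiber_upd j v u); under eq_bigr do rewrite G_upd.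
rewrite big_mkcondr /= (eq_bigr (fun y => mu j v * G y)); last first.
  by move=> y /eqP yj; rewrite prod_massE yj.
rewrite -mulr_sumr /prob (big_mkcond E) /= (eq_bigr _ (fun y _ => prod_massE y)).
congr (_ * _); rewrite [RHS](partition_big (fun y : {ffun 'I_n -> X} => y j) xpredT) //=.
rewrite (eq_bigr (fun u => mu j u * \sum_(y : {ffun 'I_n -> X} | y j == v) G y)) => [|u _].
  by rewrite -mulr_suml mu_sum1 mul1r.
by rewrite -(fiber u) mulr_sumr; apply: eq_bigr => y /eqP ->.
Qed.

Variable f : 'I_n -> X -> R.

(* [crosses s c a y]: the running product [c * f j1 (y j1) * ... * f jm (y jm)]
   along the prefixes of [s] is at least 1 for some prefix length [m >= a]. *)
Fixpoint crosses (s : seq 'I_n) (c : R) (a : nat) (y : {ffun 'I_n -> X}) : bool :=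
  ((a == 0)%N && (1 <= c)) ||
  if s is j :: s' then crosses s' (c * f j (y j)) a.-1 y else false.

Lemma crosses_upd s c a (y : {ffun 'I_n -> X}) j u :
  j \notin s -> crosses s c a (upd y j u) = crosses s c a y.
Proof.
elim: s c a => [//|i s IH] c a /=; rewrite inE negb_or => /andP[ji js].
by rewrite upd_neq 1?eq_sym // IH.
Qed.

Lemma crossesP s c a m (y : {ffun 'I_n -> X}) : (a <= m <= size s)%N ->
  1 <= c * \prod_(j <- take m s) f j (y j) -> crosses s c a y.
Proof.
elim: s c a m => [|j s IH] c a [|m] /=; rewrite ?big_nil ?mulr1 //.
- by case: a => // _ ->.
- by rewrite andbF.
- by case: a => // _ ->.
rewrite big_cons mulrA ltnS => am c1; apply/orP; right.
by apply: (IH _ _ m) => //; case: a am.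
Qed.

Variable rho : R.
Hypothesis f_ge0 : forall i x, 0 <= f i x.
Hypothesis rho_ge0 : 0 <= rho.
Hypothesis rho_le1 : rho <= 1.

(* Ville's maximal inequality for the nonnegative supermartingale of running
   products: each new factor has mean at most [rho] given the past. *)
Lemma prob_crosses_le s c a : uniq s ->
  {in s, forall j, \sum_v mu j v * f j v <= rho} -> 0 <= c ->
  prob (crosses s c a) <= c * rho ^+ a.
Proof.
elim: s c a => [|j s IH] c a Us mean_le c_ge0.
all: have [/andP[/eqP -> c1]|cont] := boolP ((a == 0)%N && (1 <= c));
  first by rewrite expr0 mulr1; apply: le_trans (prob_le1 _) c1.
  rewrite /prob big_pred0 ?mulr_ge0 ?exprn_ge0 // => y.
  by rewrite /= (negbTE cont).
move: Us => /= /andP[js Us].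
rewrite /prob (eq_bigl (fun y : {ffun 'I_n -> X} => crosses s (c * f j (y j)) a.-1 y)).
  2: by move=> y /=; rewrite (negbTE cont).
rewrite (partition_big (fun y : {ffun 'I_n -> X} => y j) xpredT) //=.
under eq_bigr => v _.
  rewrite (eq_bigl (fun y : {ffun 'I_n -> X} => (y j == v) && crosses s (c * f j v) a.-1 y)).
    2: by move=> y; case: eqP => [->|]; rewrite ?andbT ?andbF.
  rewrite prob_fiber => [|y u]; last exact: crosses_upd.
  over.
apply: (@le_trans _ _ (\sum_v mu j v * (c * f j v * rho ^+ a.-1))).
  apply: ler_sum => v _; apply: ler_wpM2l; first exact: mu_ge0.
  apply: IH => //; last exact: mulr_ge0.
  by move=> i si; apply: mean_le; rewrite inE si orbT.
rewrite (eq_bigr (fun v => c * rho ^+ a.-1 * (mu j v * f j v))) => [|v _]; last by ring.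
rewrite -mulr_sumr; apply: (@le_trans _ _ (c * rho ^+ a.-1 * rho)).
  by apply: ler_wpM2l; [rewrite mulr_ge0 ?exprn_ge0 | apply: mean_le; rewrite inE eqxx].
rewrite -mulrA; apply: ler_wpM2l => //.
by case: a {cont} => [|a] /=; rewrite ?expr0 ?mul1r // -exprSr.
Qed.

End ProductMeasure.

Section SequentialTest.
Variables (R : realType) (X : finType) (n : nat) (mu : 'I_n -> X -> R).
Hypothesis mu_ge0 : forall i x, 0 <= mu i x.
Hypothesis mu_sum1 : forall i, \sum_x mu i x = 1.
Variables Qa Qb : X -> R.
Hypotheses (Qa_pmf : is_pmf Qa) (Qb_pmf : is_pmf Qb).
Hypotheses (Qa_gt0 : forall x, 0 < Qa x) (Qb_gt0 : forall x, 0 < Qb x).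

Lemma prob_llr_prefix_ge0 (s : seq 'I_n) (E : pred {ffun 'I_n -> X}) a :
  uniq s -> {in s, forall j, mu j = Qa} ->
  (forall y, E y -> exists2 m, (a <= m <= size s)%N &
     0 <= \sum_(j <- take m s) ln (Qb (y j) / Qa (y j))) ->
  prob mu E <= bhattacharyya Qa Qb ^+ a.
Proof.
move=> s_uniq mu_s E_prefix.
(* Running products of sqrt (Qb / Qa): they reach 1 on such a prefix, and
   under [Qa] their factors have mean [bhattacharyya Qa Qb]. *)
pose f (_ : 'I_n) v := expR (ln (Qb v / Qa v) / 2).
apply: (@le_trans _ _ (prob mu (crosses f s 1 a))).
  apply: le_prob => // y /E_prefix[m am llr_ge0]; apply: (crossesP am).
  by rewrite mul1r -expR_sum -mulr_suml -expR0 ler_expR divr_ge0.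
rewrite -[leRHS]mul1r; apply: prob_crosses_le => //.
- by move=> i v; apply: expR_ge0.
- exact: bhattacharyya_ge0.
- exact: bhattacharyya_le1.
by move=> j /mu_s ->; rewrite (bhattacharyya_expR_llr Qa_gt0 Qb_gt0).
Qed.

End SequentialTest.

Section ChangePoint.
Variables (R : realType) (X : finType) (n kstar : nat).
Hypothesis kstar_bounds : (1 < kstar <= n)%N.

Lemma statS_split (Q0 Q1 : X -> R) (y : {ffun 'I_n -> X}) k k' : (k <= k')%N ->
  statS Q0 Q1 y k =
  \sum_(i < n | (k <= i.+1 < k')%N) ln (Q1 (y i) / Q0 (y i)) + statS Q0 Q1 y k'.
Proof.
move=> kk'; rewrite /statS (bigID (fun i : 'I_n => (k' <= i.+1)%N)) /= addrC.
congr (_ + _); apply: eq_bigl => i; rewrite -?ltnNge //.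
by apply/idP/idP => [/andP[_ ->]//|k'i]; rewrite k'i andbT (leq_trans kk' k'i).
Qed.

Lemma sum_seq_uniq_pred (s : seq 'I_n) (P : pred 'I_n) (F : 'I_n -> R) :
  uniq s -> s =i P -> \sum_(j <- s) F j = \sum_(i | P i) F i.
Proof.
move=> s_uniq sP; rewrite -[RHS]big_filter; apply: perm_big; apply: uniq_perm => //.
  exact: filter_uniq (index_enum_uniq _).
by move=> i; rewrite mem_filter mem_index_enum andbT sP.
Qed.

Variable i0 : 'I_n.

(* Positions [kstar - 1, kstar - 2, ..., 1] before the change, and
   [kstar, kstar + 1, ..., n] after it, in the 1-based indexing of [statS]. *)
Definition before_change : seq 'I_n :=
  [seq insubd i0 (kstar.-2 - t)%N | t <- iota 0 kstar.-1].
Definition after_change : seq 'I_n :=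
  [seq insubd i0 (kstar.-1 + t)%N | t <- iota 0 (n - kstar.-1)].

Lemma before_change_uniq : uniq before_change.
Proof.
rewrite map_inj_in_uniq ?iota_uniq // => t1 t2.
rewrite !mem_iota !add0n => t1_lt t2_lt /(congr1 val); rewrite !val_insubd.
by case: ifP; case: ifP => *; lia.
Qed.

Lemma after_change_uniq : uniq after_change.
Proof.
rewrite map_inj_in_uniq ?iota_uniq // => t1 t2.
rewrite !mem_iota !add0n => t1_lt t2_lt /(congr1 val); rewrite !val_insubd.
by case: ifP; case: ifP => *; lia.
Qed.

Lemma mem_take_before_change m : (m <= kstar.-1)%N ->
  take m before_change =i [pred i : 'I_n | kstar - m <= i.+1 < kstar]%N.
Proof.
move=> m_le i; rewrite /before_change -map_take take_iota (minn_idPl m_le) inE.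
apply/mapP/idP => [[t]|i_range].
  by rewrite mem_iota add0n => t_lt ->; rewrite val_insubd; case: ifP => *; lia.
exists (kstar.-2 - i)%N; first by rewrite mem_iota add0n; lia.
by apply: val_inj; rewrite val_insubd /=; case: ifP => *; have := ltn_ord i; lia.
Qed.

Lemma mem_take_after_change m : (m <= n - kstar.-1)%N ->
  take m after_change =i [pred i : 'I_n | kstar <= i.+1 < kstar + m]%N.
Proof.
move=> m_le i; rewrite /after_change -map_take take_iota (minn_idPl m_le) inE.
apply/mapP/idP => [[t]|i_range].
  by rewrite mem_iota add0n => t_lt ->; rewrite val_insubd; case: ifP => *; lia.
exists (i - kstar.-1)%N; first by rewrite mem_iota add0n; have := ltn_ord i; lia.
by apply: val_inj; rewrite val_insubd /=; case: ifP => *; have := ltn_ord i; lia.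
Qed.

End ChangePoint.

Lemma Pat_pmf (R : realType) (X : finType) n kstar (P0 P1 : X -> R) (i : 'I_n) :
  is_pmf P0 -> is_pmf P1 -> is_pmf (Pat kstar P0 P1 i).
Proof. by rewrite /Pat; case: ifP. Qed.

Section CusumAccuracy.
Variables (R : realType) (X : finType) (n kstar : nat) (Q0 Q1 : X -> R).
Hypotheses (Q0_pmf : is_pmf Q0) (Q1_pmf : is_pmf Q1).
Hypotheses (Q0_gt0 : forall x, 0 < Q0 x) (Q1_gt0 : forall x, 0 < Q1 x).
Hypothesis kstar_bounds : (1 < kstar <= n)%N.
Variable khat : {ffun 'I_n -> X} -> nat.
Hypothesis khat_beats_kstar : forall y,
  (1 <= khat y <= n)%N /\ statS Q0 Q1 y kstar <= statS Q0 Q1 y (khat y).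

Let mu_ge0 (i : 'I_n) x : 0 <= Pat kstar Q0 Q1 i x.
Proof. by have [] := Pat_pmf kstar i Q0_pmf Q1_pmf. Qed.

Let mu_sum1 (i : 'I_n) : \sum_x Pat kstar Q0 Q1 i x = 1.
Proof. by have [] := Pat_pmf kstar i Q0_pmf Q1_pmf. Qed.

Let n_gt0 : (0 < n)%N. Proof. lia. Qed.
Let i0 : 'I_n := Ordinal n_gt0.

Lemma prob_cusum_early alpha :
  prob (Pat kstar Q0 Q1) (fun y => khat y < kstar - alpha)%N
  <= bhattacharyya Q0 Q1 ^+ alpha.
Proof.
apply: (prob_llr_prefix_ge0 mu_ge0 mu_sum1 Q0_pmf Q1_pmf Q0_gt0 Q1_gt0
         (before_change_uniq kstar_bounds i0)).
  move=> j; rewrite -(take_size (before_change _ _)) size_map size_iota.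
  by rewrite mem_take_before_change // inE /Pat => /andP[_ ->].
move=> y early; have [/andP[khat_ge1 _] beats] := khat_beats_kstar y.
exists (kstar - khat y)%N; first by rewrite size_map size_iota; lia.
have m_le : (kstar - khat y <= kstar.-1)%N by lia.
rewrite (sum_seq_uniq_pred _ (take_uniq _ (before_change_uniq kstar_bounds i0))
                           (mem_take_before_change kstar_bounds i0 m_le)).
rewrite (_ : kstar - (kstar - khat y) = khat y)%N; last lia.
by move: beats; rewrite (statS_split _ _ _ (k := khat y) (k' := kstar)) /=; [lra | lia].
Qed.

Lemma prob_cusum_late alpha :
  prob (Pat kstar Q0 Q1) (fun y => kstar + alpha < khat y)%N
  <= bhattacharyya Q0 Q1 ^+ alpha.
Proof.
rewrite bhattacharyyaC.
apply: (prob_llr_prefix_ge0 mu_ge0 mu_sum1 Q1_pmf Q0_pmf Q1_gt0 Q0_gt0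
         (after_change_uniq kstar_bounds i0)).
  move=> j; rewrite -(take_size (after_change _ _)) size_map size_iota.
  by rewrite mem_take_after_change // inE /Pat => /andP[kj _]; rewrite ltnNge kj.
move=> y late; have [/andP[_ khat_len] beats] := khat_beats_kstar y.
exists (khat y - kstar)%N; first by rewrite size_map size_iota; lia.
have m_le : (khat y - kstar <= n - kstar.-1)%N by lia.
rewrite (sum_seq_uniq_pred _ (take_uniq _ (after_change_uniq kstar_bounds i0))
                           (mem_take_after_change kstar_bounds i0 m_le)).
rewrite (_ : kstar + (khat y - kstar) = khat y)%N; last lia.
under eq_bigr => i _ do rewrite -invf_div lnV ?posrE ?divr_gt0 //.
rewrite sumrN oppr_ge0.
by move: beats; rewrite (statS_split _ _ _ (k := kstar) (k' := khat y)) /=; [lra | lia].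
Qed.

Lemma prob_cusum_error alpha :
  prob (Pat kstar Q0 Q1)
    (fun y => ~~ ((kstar - alpha <= khat y) && (khat y <= kstar + alpha)))%N
  <= 2 * bhattacharyya Q0 Q1 ^+ alpha.
Proof.
pose early y := (khat y < kstar - alpha)%N; pose late y := (kstar + alpha < khat y)%N.
apply: le_trans (@prob_le_predU _ _ _ _ mu_ge0 _ early late _) _.
  by move=> y; rewrite negb_and -!ltnNge.
by rewrite mulr_natl mulr2n lerD ?prob_cusum_early ?prob_cusum_late.
Qed.

End CusumAccuracy.

Lemma probY_prob (R : realType) (X : finType) n kstar (P0 P1 : X -> R)
    (W : X -> X -> R) (E : pred {ffun 'I_n -> X}) :
  probY kstar P0 P1 W E = prob (Pat kstar (Qout W P0) (Qout W P1)) E.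
Proof.
rewrite /probY exchange_big /=; apply: eq_bigr => y _.
rewrite /prod_mass -(bigA_distr_bigA (fun i u => Pat kstar P0 P1 i u * W u (y i))) /=.
by apply: eq_bigr => i _; rewrite /Pat /Qout; case: ifP.
Qed.

Section Bound.
Variables (R : realType) (X : finType) (n alpha : nat) (eps : R) (P0 P1 : X -> R).

Lemma rr_bound_ge0 : 0 <= rr_bound n alpha eps P0 P1.
Proof.
rewrite /rr_bound /= mulr_ge0 // le_min powR_ge0 andbT.
by apply: sumr_ge0 => i _; apply: expR_ge0.
Qed.

Lemma istar_gt0 : (0 < alpha)%N -> (alpha < n.-1)%N ->
  (0 < Defs.nat_of_pos (Num.ceil (log2 ((n%:R - 1) / alpha%:R : R))))%N.
Proof.
move=> alpha_gt0 alpha_lt.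
have ratio_gt1 : 1 < (n%:R - 1) / alpha%:R :> R.
  rewrite ltr_pdivlMr ?ltr0n // mul1r.
  have : (alpha.+2 <= n)%N by lia.
  by rewrite -(ler_nat R) -!natr1; lra.
have : 0 < log2 ((n%:R - 1) / alpha%:R : R) by rewrite /log2 divr_gt0 ?ln_gt0 ?ltr1n.
by rewrite -ceil_gt0; case: (Num.ceil _).
Qed.

(* Only the i = 1 term of the sum in the bound is needed. *)
Lemma rr_bound_ge (b : R) : (0 < alpha)%N -> (alpha < n.-1)%N -> 0 <= b ->
  let d := (expR eps - 1) / (expR eps + #|X|%:R - 1) * dTV P0 P1 in
  b ^+ 2 + d ^+ 2 <= 1 ->
  8 * d ^+ 2 <= Num.min (2 * eps) (tanh_half eps * sP P0 P1) ^+ 2 ->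
  2 * b ^+ alpha <= rr_bound n alpha eps P0 P1.
Proof.
move=> alpha_gt0 alpha_lt b_ge0 d lecam d_sr.
rewrite /rr_bound /= ler_pM2l // le_min.
set C := 2 * _ * _; set sr := Num.min _ _.
have {}d_sr : 8 * d ^+ 2 <= sr ^+ 2 := d_sr.
have -> : C = 2 * d ^+ 2 by rewrite /d exprMn mulrA.
have d2_ge0 := sqr_ge0 d; clearbody d.
apply/andP; split; last by apply: exprn_le_powR_half => //; lra.
rewrite big_ltn; last by have := istar_gt0 alpha_gt0 alpha_lt; lia.
rewrite -[b ^+ alpha]addr0 lerD //; last by apply: sumr_ge0 => i _; apply: expR_ge0.
have b_le : b <= expR (- d ^+ 2 / 2) by apply: ler_expRN_half.
apply: le_trans (lerXn2r alpha _ _ b_le) _; rewrite ?nnegrE ?expR_ge0 //.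
rewrite -expRM_natr ler_expR expr0 mul1r.
have : (2 * d ^+ 2) ^+ 2 / sr ^+ 2 <= 2 * d ^+ 2 / 4 by apply: sqr_div_sqr_le; lra.
have -> : - (alpha%:R * (2 * d ^+ 2) ^+ 2) / sr ^+ 2 =
          - (alpha%:R * ((2 * d ^+ 2) ^+ 2 / sr ^+ 2)) by rewrite mulrA mulNr.
have -> : - d ^+ 2 / 2 * alpha%:R = - (alpha%:R * (2 * d ^+ 2 / 4)) by field.
by move=> le_sr; rewrite lerN2 ler_wpM2l.
Qed.

End Bound.

Theorem theorem5p6 (R : realType) (X : finType) (P0 P1 : X -> R)
    (eps : R) (n kstar alpha : nat) :
  is_pmf P0 -> is_pmf P1 ->
  (forall x, 0 < P0 x) -> (forall x, 0 < P1 x) ->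
  0 < eps -> (1 < n)%N -> (1 < kstar <= n)%N -> (1 <= alpha <= n)%N ->
  @ldp R X X eps (Wr eps) /\
  forall khat : {ffun 'I_n -> X} -> nat,
    (forall y, (1 <= khat y <= n)%N /\
       forall k, (1 <= k <= n)%N ->
         statS (Qout (Wr eps) P0) (Qout (Wr eps) P1) y k
         <= statS (Qout (Wr eps) P0) (Qout (Wr eps) P1) y (khat y)) ->
    probY kstar P0 P1 (Wr eps)
      (fun y => ~~ ((kstar - alpha <= khat y)%N && (khat y <= kstar + alpha)%N))
    <= rr_bound n alpha eps P0 P1.
Proof.
move=> P0_pmf P1_pmf P0_gt0 P1_gt0 eps_gt0 n_gt1 kstar_bounds alpha_bounds.
split=> [|khat khat_max]; first exact: ldp_Wr.
rewrite probY_prob.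
have [alpha_large|alpha_small] := leqP n.-1 alpha.
  rewrite /prob big_pred0 ?rr_bound_ge0 // => y.
  by have [/andP[? ?] _] := khat_max y; apply/negbTE; rewrite negbK; apply/andP; split; lia.
have Q0_pmf := Qout_Wr_pmf eps_gt0 P0_pmf; have Q1_pmf := Qout_Wr_pmf eps_gt0 P1_pmf.
have Q0_gt0 := fun x => Qout_Wr_gt0 eps_gt0 x P0_pmf.
have Q1_gt0 := fun x => Qout_Wr_gt0 eps_gt0 x P1_pmf.
apply: (le_trans (prob_cusum_error Q0_pmf Q1_pmf Q0_gt0 Q1_gt0 kstar_bounds _ alpha)).
  by move=> y; have [range max] := khat_max y; split=> //; apply: max; lia.
apply: rr_bound_ge; rewrite -?dTV_Qout_Wr //; first by lia.
- exact: bhattacharyya_ge0.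
- exact: bhattacharyya_sqr_add_dTV_sqr_le1.
exact: dTV_Qout_Wr_sqr_le.
Qed.
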